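(* The class $\mathrm{TM}_r(d)$ is closed under ultraproducts and ultraroots. That is: (a) for every family $(G_i)_{i\in I}$ of graphs in $\mathrm{TM}_r(d)$ and every ultrafilter $U$ on $I$, the ultraproduct $\prod_{i\in I} G_i/U$ belongs to $\mathrm{TM}_r(d)$; and (b) for every graph $H$, if some ultrapower $\prod_{i\in I} H/U$ of $H$ (for an ultrafilter $U$ on an index set $I$) belongs to $\mathrm{TM}_r(d)$, then $H$ belongs to $\mathrm{TM}_r(d)$.
   Context: Graphs are simple undirected graphs (structures over an irreflexive symmetric binary relation $E$) of arbitrary cardinality. A tree model of $r$ labels and height $d$ is a pair $(t,S)$ where $t$ is an $(r+1)$-labeled rooted tree (a possibly infinite tree with a distinguished root whose nodes are partitioned into label classes $P_1,\dots,P_{r+1}$) and $S \subseteq [r]^2\times[d]$ such that: every root-to-leaf path has length exactly $d$; leaves are labeled from $[r]$ and internal nodes with $r+1$; $(i,j,l)\in S$ iff $(j,i,l)\in S$. It is a tree model of the graph whose vertices are the leaves of $t$, two leaves with labels $i,j$ at distance $2l$ in $t$ being adjacent iff $(i,j,l)\in S$. $\mathrm{TM}_r(d)$ is the class of all graphs isomorphic to a graph having such a tree model. The ultraproduct $\prod_{i\in I}A_i/U$ has as universe the classes of $\prod_i A_i$ under $\bar a\sim\bar b$ iff $\{i: a_i=b_i\}\in U$, with a relation holding on classes iff it holds coordinatewise on a set of indices in $U$; when all $A_i=A$ it is the ultrapower of $A$, and $A$ is its ultraroot. *)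

From Stdlib Require Import Arith.

Definition is_graph (V : Type) (E : V -> V -> Prop) : Prop :=
  (forall x, ~ E x x) /\ (forall x y, E x y -> E y x).

Definition graph_iso (V W : Type) (E : V -> V -> Prop) (F : W -> W -> Prop)
  (f : V -> W) : Prop :=
  (forall x y, f x = f y -> x = y) /\
  (forall w, exists v, f v = w) /\
  (forall x y, E x y <-> F (f x) (f y)).

(* A rooted tree on node type N: a root, a parent map (par root = root) and a
   depth function with dep root = 0 and dep v = dep (par v) + 1 for v <> root.
   (Hence every node reaches the root by iterating par, i.e. the structure is a
   rooted tree, and dep is the distance to the root.) *)
Definition rooted_tree (N : Type) (root : N) (par : N -> N) (dep : N -> nat) :=
  par root = root /\ dep root = 0 /\
  (forall v, v <> root -> dep v = S (dep (par v))).

Definition is_child (N : Type) (root : N) (par : N -> N) (w v : N) : Prop :=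
  w <> root /\ par w = v.

Definition is_leaf (N : Type) (root : N) (par : N -> N) (v : N) : Prop :=
  ~ exists w, is_child N root par w v.

(* Two leaves x, y (both at depth d) are at tree distance 2l iff their lowest
   common ancestor is l levels above them. *)
Definition leaf_dist_half (N : Type) (par : N -> N) (x y : N) (l : nat) : Prop :=
  Nat.iter l par x = Nat.iter l par y /\
  (forall k, k < l -> Nat.iter k par x <> Nat.iter k par y).

Definition tree_model (r d : nat) (N : Type) (root : N) (par : N -> N)
  (dep : N -> nat) (lab : N -> nat) (S : nat -> nat -> nat -> Prop) : Prop :=
  rooted_tree N root par dep /\
  (forall v, dep v <= d) /\
  (forall v, is_leaf N root par v -> dep v = d) /\
  (forall v, is_leaf N root par v -> 1 <= lab v <= r) /\
  (forall v, ~ is_leaf N root par v -> lab v = r + 1) /\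
  (forall i j l, S i j l -> (1 <= i <= r /\ 1 <= j <= r /\ 1 <= l <= d)) /\
  (forall i j l, S i j l <-> S j i l).

Definition tm_leaf (N : Type) (root : N) (par : N -> N) : Type :=
  { v : N | is_leaf N root par v }.

Definition tm_edge (N : Type) (root : N) (par : N -> N) (lab : N -> nat)
  (S : nat -> nat -> nat -> Prop) (x y : tm_leaf N root par) : Prop :=
  exists l, leaf_dist_half N par (proj1_sig x) (proj1_sig y) l /\
            S (lab (proj1_sig x)) (lab (proj1_sig y)) l.

Definition TM (r d : nat) (V : Type) (E : V -> V -> Prop) : Prop :=
  exists (N : Type) (root : N) (par : N -> N) (dep : N -> nat)
         (lab : N -> nat) (S : nat -> nat -> nat -> Prop),
    tree_model r d N root par dep lab S /\
    exists f : tm_leaf N root par -> V,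
      graph_iso (tm_leaf N root par) V (tm_edge N root par lab S) E f.

Definition ultrafilter (I : Type) (U : (I -> Prop) -> Prop) : Prop :=
  U (fun _ => True) /\
  ~ U (fun _ => False) /\
  (forall A B : I -> Prop, U A -> (forall i, A i -> B i) -> U B) /\
  (forall A B : I -> Prop, U A -> U B -> U (fun i => A i /\ B i)) /\
  (forall A : I -> Prop, U A \/ U (fun i => ~ A i)).

Definition up_class (I : Type) (V : I -> Type) (U : (I -> Prop) -> Prop)
  (a : forall i, V i) : (forall i, V i) -> Prop :=
  fun b => U (fun i => a i = b i).

Definition ultraprod (I : Type) (V : I -> Type) (U : (I -> Prop) -> Prop) : Type :=
  { P : (forall i, V i) -> Prop | exists a, P = up_class I V U a }.

Definition ultraprod_rel (I : Type) (V : I -> Type) (U : (I -> Prop) -> Prop)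
  (E : forall i, V i -> V i -> Prop) (P Q : ultraprod I V U) : Prop :=
  exists a b, proj1_sig P = up_class I V U a /\ proj1_sig Q = up_class I V U b /\
              U (fun i => E i (a i) (b i)).

From Stdlib Require Import Arith Lia Classical ClassicalEpsilon
  FunctionalExtensionality PropExtensionality ProofIrrelevance.

(* (a) is Łoś's theorem for tree models.  Given tree models (t_i, S_i) of the G_i, the
   ultraproduct of the trees t_i, with the coordinatewise parent map, is again a rooted
   tree of height d.  Depths and labels take finitely many values, so they have U-limits,
   and the new S consists of the triples lying in U-many S_i.  Its leaves are the classes
   of sequences of leaves, and since two leaves are at distance at most 2d, adjacency is
   decided coordinatewise: the graph of this tree model is the ultraproduct of the G_i.
   (b) The diagonal map embeds H into its ultrapower as an induced subgraph, and TM_r(d)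
   is closed under nonempty induced subgraphs: restrict a tree model to the ancestors of
   the leaves to be kept. *)

Lemma sig_eq {A : Type} {P : A -> Prop} (x y : {a | P a}) :
  proj1_sig x = proj1_sig y -> x = y.
Proof. apply eq_sig_hprop. intros; apply proof_irrelevance. Qed.

Definition induced_rel {V : Type} (E : V -> V -> Prop) (P : V -> Prop)
  (x y : {v | P v}) : Prop :=
  E (proj1_sig x) (proj1_sig y).

Section GraphIso.

Context {V W X : Type} {E : V -> V -> Prop} {F : W -> W -> Prop} {G : X -> X -> Prop}.

Lemma graph_iso_id : graph_iso V V E E (fun v => v).
Proof. repeat split; eauto. Qed.

Lemma graph_iso_comp (f : V -> W) (g : W -> X) :
  graph_iso V W E F f -> graph_iso W X F G g -> graph_iso V X E G (fun v => g (f v)).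
Proof.
  intros (f_inj & f_surj & f_edge) (g_inj & g_surj & g_edge). split; [|split].
  - auto.
  - intros x. destruct (g_surj x) as [w <-]. destruct (f_surj w) as [v <-]. eauto.
  - intros v v'. rewrite f_edge. apply g_edge.
Qed.

Lemma graph_iso_sym (f : V -> W) :
  graph_iso V W E F f -> exists g, graph_iso W V F E g.
Proof.
  intros (f_inj & f_surj & f_edge).
  set (g w := proj1_sig (constructive_indefinite_description _ (f_surj w))).
  assert (fg : forall w, f (g w) = w).
  { intros w. exact (proj2_sig (constructive_indefinite_description _ (f_surj w))). }
  exists g. split; [|split].
  - intros w w' Hg. rewrite <- (fg w), <- (fg w'), Hg. reflexivity.
  - intros v. exists (f v). apply f_inj. apply fg.
  - intros w w'. rewrite f_edge, !fg. tauto.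
Qed.

Lemma graph_iso_restrict (f : V -> W) (Q : V -> Prop) (P : W -> Prop)
  (QP : forall v, Q v <-> P (f v)) :
  graph_iso V W E F f ->
  graph_iso {v | Q v} {w | P w} (induced_rel E Q) (induced_rel F P)
    (fun v => exist P (f (proj1_sig v)) (proj1 (QP _) (proj2_sig v))).
Proof.
  intros (f_inj & f_surj & f_edge). split; [|split].
  - intros [v Qv] [v' Qv'] Hf. apply sig_eq, f_inj.
    exact (f_equal (@proj1_sig _ _) Hf).
  - intros [w Pw]. destruct (f_surj w) as [v <-].
    exists (exist Q v (proj2 (QP v) Pw)). apply sig_eq. reflexivity.
  - intros [v Qv] [v' Qv']. apply f_edge.
Qed.

End GraphIso.

Section TMIso.

Variables r d : nat.

Lemma TM_of_tree_model N root par dep lab adj :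
  tree_model r d N root par dep lab adj ->
  TM r d (tm_leaf N root par) (tm_edge N root par lab adj).
Proof.
  intros HT. exists N, root, par, dep, lab, adj. split; [exact HT|].
  exists (fun x => x). apply graph_iso_id.
Qed.

Lemma TM_iso V W E F (f : V -> W) :
  TM r d V E -> graph_iso V W E F f -> TM r d W F.
Proof.
  intros (N & root & par & dep & lab & adj & HT & g & Hg) Hf.
  exists N, root, par, dep, lab, adj. split; [exact HT|].
  eexists. exact (graph_iso_comp g f Hg Hf).
Qed.

Lemma TM_iso_inv V W E F (g : W -> V) :
  TM r d V E -> graph_iso W V F E g -> TM r d W F.
Proof.
  intros HV Hg. destruct (graph_iso_sym g Hg) as [f Hf]. exact (TM_iso _ _ _ _ f HV Hf).
Qed.

End TMIso.

Section RootedTree.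

Variables (N : Type) (root : N) (par : N -> N) (dep : N -> nat).
Hypothesis rooted : rooted_tree N root par dep.

Lemma iter_par_dep_root x : Nat.iter (dep x) par x = root.
Proof.
  destruct rooted as (_ & _ & dep_par).
  remember (dep x) as n eqn:Hn. revert x Hn. induction n as [|n IH]; intros x Hn.
  - apply NNPP. intros Hx. rewrite (dep_par x Hx) in Hn. discriminate.
  - assert (Hx : x <> root) by (intros ->; destruct rooted as (_ & dep_root & _); congruence).
    rewrite Nat.iter_succ_r. apply IH. rewrite (dep_par x Hx) in Hn. congruence.
Qed.

Lemma iter_par_has_child k x :
  Nat.iter k par x = x \/
  exists j, Nat.iter j par x <> root /\ par (Nat.iter j par x) = Nat.iter k par x.
Proof.
  destruct rooted as (par_root & _).
  induction k as [|k IH]; [now left|].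
  rewrite Nat.iter_succ. destruct (classic (Nat.iter k par x = root)) as [E|E].
  - replace (par (Nat.iter k par x)) with (Nat.iter k par x) by (rewrite E; auto).
    exact IH.
  - right. exists k. auto.
Qed.

End RootedTree.

Lemma tm_leaf_inhabited r d N root par dep lab adj :
  tree_model r d N root par dep lab adj -> inhabited (tm_leaf N root par).
Proof.
  intros ((_ & dep_root & dep_par) & dep_le & _).
  apply NNPP. intros no_leaf.
  assert (every_depth : forall k, exists v, dep v = k).
  { induction k as [|k [v Hv]]; [eauto|].
    assert (Hv' : ~ is_leaf N root par v) by (intros L; exact (no_leaf (inhabits (exist _ v L)))).
    apply NNPP in Hv'. destruct Hv' as [w [Hw <-]].
    exists w. rewrite dep_par; congruence. }
  destruct (every_depth (S d)) as [v Hv]. specialize (dep_le v). lia.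
Qed.

Lemma tm_lab_le r d N root par dep lab adj v :
  tree_model r d N root par dep lab adj -> lab v <= S r.
Proof.
  intros (_ & _ & _ & lab_leaf & lab_inner & _).
  destruct (classic (is_leaf N root par v)) as [L|L].
  - specialize (lab_leaf v L). lia.
  - rewrite (lab_inner v L). lia.
Qed.

Lemma leaf_dist_half_embed {N M : Type} (parN : N -> N) (parM : M -> M) (h : M -> N) :
  (forall x y, h x = h y -> x = y) -> (forall v, h (parM v) = parN (h v)) ->
  forall x y l, leaf_dist_half M parM x y l <-> leaf_dist_half N parN (h x) (h y) l.
Proof.
  intros h_inj h_par x y l. unfold leaf_dist_half.
  assert (iter_h : forall k z, h (Nat.iter k parM z) = Nat.iter k parN (h z))
    by (intros; apply Nat.iter_swap_gen, h_par).
  assert (iter_eq : forall k, Nat.iter k parM x = Nat.iter k parM y <->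
                              Nat.iter k parN (h x) = Nat.iter k parN (h y)).
  { intros k. rewrite <- !iter_h. split; [congruence|apply h_inj]. }
  split; intros [Hl Hk]; split.
  - apply iter_eq, Hl.
  - intros k lt E. apply (Hk k lt), iter_eq, E.
  - apply iter_eq, Hl.
  - intros k lt E. apply (Hk k lt), iter_eq, E.
Qed.

Lemma TM_inhabited r d V E : TM r d V E -> inhabited V.
Proof.
  intros (N & root & par & dep & lab & adj & HT & f & _).
  destruct (tm_leaf_inhabited _ _ _ _ _ _ _ _ HT) as [x]. exact (inhabits (f x)).
Qed.

Record tm_witness (r d : nat) (V : Type) (E : V -> V -> Prop) : Type := {
  w_node : Type;
  w_root : w_node;
  w_par : w_node -> w_node;
  w_dep : w_node -> nat;
  w_lab : w_node -> nat;
  w_adj : nat -> nat -> nat -> Prop;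
  w_map : tm_leaf w_node w_root w_par -> V;
  w_model : tree_model r d w_node w_root w_par w_dep w_lab w_adj;
  w_iso : graph_iso _ V (tm_edge w_node w_root w_par w_lab w_adj) E w_map }.

Lemma TM_witness r d V E : TM r d V E -> inhabited (tm_witness r d V E).
Proof.
  intros (N & root & par & dep & lab & adj & HT & f & Hf).
  exact (inhabits (Build_tm_witness r d V E N root par dep lab adj f HT Hf)).
Qed.

Section AncestorSubtree.

Variables (r d : nat) (N : Type) (root : N) (par : N -> N) (dep lab : N -> nat)
  (adj : nat -> nat -> nat -> Prop).
Hypothesis HT : tree_model r d N root par dep lab adj.

Variable Q : N -> Prop.
Hypothesis Q_leaf : forall v, Q v -> is_leaf N root par v.
Hypothesis Q_nonempty : exists v, Q v.

Definition ancestral (v : N) : Prop := exists x k, Q x /\ Nat.iter k par x = v.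

Lemma ancestral_root : ancestral root.
Proof.
  destruct Q_nonempty as [x Qx]. exists x, (dep x). split; [exact Qx|].
  exact (iter_par_dep_root _ _ _ _ (proj1 HT) x).
Qed.

Lemma ancestral_par v : ancestral v -> ancestral (par v).
Proof. intros (x & k & Qx & <-). exists x, (S k). auto. Qed.

Definition sub_node : Type := {v | ancestral v}.
Definition sub_root : sub_node := exist _ root ancestral_root.
Definition sub_par (v : sub_node) : sub_node :=
  exist _ (par (proj1_sig v)) (ancestral_par _ (proj2_sig v)).
Definition sub_dep (v : sub_node) : nat := dep (proj1_sig v).
Definition sub_lab (v : sub_node) : nat := lab (proj1_sig v).

Lemma sub_leaf_Q v : is_leaf sub_node sub_root sub_par v -> Q (proj1_sig v).
Proof.
  intros L. destruct v as [v Av]. pose proof Av as (x & k & Qx & <-). simpl.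
  destruct (iter_par_has_child _ _ _ _ (proj1 HT) k x) as [-> | (j & Hj & Hpar)]; [exact Qx|].
  exfalso. apply L.
  exists (exist ancestral (Nat.iter j par x) (ex_intro _ x (ex_intro _ j (conj Qx eq_refl)))).
  split.
  - intros E. apply Hj. exact (f_equal (@proj1_sig _ _) E).
  - apply sig_eq. exact Hpar.
Qed.

Lemma sub_leaf_iff v : is_leaf sub_node sub_root sub_par v <-> is_leaf N root par (proj1_sig v).
Proof.
  split; [intros L; exact (Q_leaf _ (sub_leaf_Q v L))|].
  intros L [w [Hw Hpar]]. apply L. exists (proj1_sig w). split.
  - intros E. apply Hw, sig_eq, E.
  - exact (f_equal (@proj1_sig _ _) Hpar).
Qed.

Lemma tree_model_sub : tree_model r d sub_node sub_root sub_par sub_dep sub_lab adj.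
Proof.
  destruct HT as ((par_root & dep_root & dep_par) & dep_le & dep_leaf & lab_leaf & lab_inner
                  & adj_range & adj_sym).
  split; [|split; [|split; [|split; [|split; [|split]]]]].
  - split; [|split].
    + apply sig_eq, par_root.
    + exact dep_root.
    + intros v Hv. apply dep_par. intros E. apply Hv, sig_eq, E.
  - intros v. apply dep_le.
  - intros v L. apply dep_leaf, sub_leaf_iff, L.
  - intros v L. apply lab_leaf, sub_leaf_iff, L.
  - intros v L. apply lab_inner. rewrite <- sub_leaf_iff. exact L.
  - exact adj_range.
  - exact adj_sym.
Qed.

Definition Q_leaves : Type := {x : tm_leaf N root par | Q (proj1_sig x)}.

Definition sub_leaf_of (x : Q_leaves) : tm_leaf sub_node sub_root sub_par :=
  let v := proj1_sig (proj1_sig x) in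
  let n : sub_node :=
    exist ancestral v (ex_intro _ v (ex_intro _ 0 (conj (proj2_sig x) eq_refl))) in
  exist _ n (proj2 (sub_leaf_iff n) (proj2_sig (proj1_sig x))).

Lemma graph_iso_sub_leaf_of :
  graph_iso Q_leaves (tm_leaf sub_node sub_root sub_par)
    (induced_rel (tm_edge N root par lab adj) (fun x => Q (proj1_sig x)))
    (tm_edge sub_node sub_root sub_par sub_lab adj) sub_leaf_of.
Proof.
  assert (dist_sub : forall v w l,
    leaf_dist_half sub_node sub_par v w l <-> leaf_dist_half N par (proj1_sig v) (proj1_sig w) l).
  { apply leaf_dist_half_embed; [apply sig_eq | reflexivity]. }
  split; [|split].
  - intros x y E. apply sig_eq, sig_eq.
    exact (f_equal (fun z => proj1_sig (proj1_sig z)) E).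
  - intros [v L]. pose proof (sub_leaf_Q v L) as Qv.
    exists (exist _ (exist _ (proj1_sig v) (proj1 (sub_leaf_iff v) L)) Qv).
    apply sig_eq, sig_eq. reflexivity.
  - intros x y. unfold induced_rel, tm_edge, sub_lab. simpl.
    setoid_rewrite dist_sub. reflexivity.
Qed.

End AncestorSubtree.

Lemma TM_induced_subgraph r d W F (P : W -> Prop) :
  TM r d W F -> (exists w, P w) -> TM r d {w | P w} (induced_rel F P).
Proof.
  intros (N & root & par & dep & lab & adj & HT & f & Hf) [w Pw].
  set (Q v := exists x : tm_leaf N root par, proj1_sig x = v /\ P (f x)).
  assert (Q_leaf : forall v, Q v -> is_leaf N root par v).
  { intros v ([x Lx] & <- & _). exact Lx. }
  assert (Q_nonempty : exists v, Q v).
  { destruct (proj1 (proj2 Hf) w) as [x <-]. exists (proj1_sig x), x. auto. }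
  assert (QP : forall x, Q (proj1_sig x) <-> P (f x)).
  { intros x. split.
    - intros (y & E & Py). apply sig_eq in E. congruence.
    - intros Px. exists x. auto. }
  eapply TM_iso; [|exact (graph_iso_restrict f _ _ QP Hf)].
  eapply TM_iso_inv;
    [|exact (graph_iso_sub_leaf_of r d N root par dep lab adj HT Q Q_leaf Q_nonempty)].
  exact (TM_of_tree_model r d _ _ _ _ _ _
    (tree_model_sub r d N root par dep lab adj HT Q Q_leaf Q_nonempty)).
Qed.

Lemma TM_induced_embedding r d W F H EH (g : H -> W) :
  TM r d W F -> inhabited H -> (forall x y, g x = g y -> x = y) ->
  (forall x y, EH x y <-> F (g x) (g y)) -> TM r d H EH.
Proof.
  intros HW [h] g_inj g_edge.
  set (P w := exists x, g x = w).
  apply (TM_iso_inv r d _ _ (induced_rel F P) _ (fun x => exist P (g x) (ex_intro _ x eq_refl))).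
  - apply TM_induced_subgraph; [exact HW | exists (g h), h; reflexivity].
  - split; [|split].
    + intros x y E. apply g_inj. exact (f_equal (@proj1_sig _ _) E).
    + intros [w [x <-]]. exists x. apply sig_eq. reflexivity.
    + exact g_edge.
Qed.

Section Ultraproduct.

Context {I : Type} {U : (I -> Prop) -> Prop} (HU : ultrafilter I U).

Lemma uf_mono {A B : I -> Prop} : U A -> (forall i, A i -> B i) -> U B.
Proof. destruct HU as (_ & _ & mono & _). apply mono. Qed.

Lemma uf_and {A B : I -> Prop} : U A -> U B -> U (fun i => A i /\ B i).
Proof. destruct HU as (_ & _ & _ & meet & _). apply meet. Qed.

Lemma uf_full {A : I -> Prop} : (forall i, A i) -> U A.
Proof. intros HA. apply (uf_mono (proj1 HU)). auto. Qed.

Lemma uf_nonempty {A : I -> Prop} : U A -> exists i, A i.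
Proof.
  intros HA. apply NNPP. intros no_i. apply (proj1 (proj2 HU)).
  apply (uf_mono HA). intros i Ai. apply no_i. eauto.
Qed.

Lemma uf_compl {A : I -> Prop} : ~ U A -> U (fun i => ~ A i).
Proof. destruct HU as (_ & _ & _ & _ & ultra). destruct (ultra A); tauto. Qed.

Lemma uf_iff {A B : I -> Prop} : (forall i, A i <-> B i) -> (U A <-> U B).
Proof. intros AB. split; intros H; apply (uf_mono H); intros i; apply AB. Qed.

Lemma uf_exists_lt (A : nat -> I -> Prop) n :
  U (fun i => exists l, l < n /\ A l i) -> exists l, l < n /\ U (A l).
Proof.
  induction n as [|n IH]; intros H.
  - destruct (uf_nonempty H) as [i [l [lt _]]]. lia.
  - destruct (classic (U (A n))) as [An|An]; [exists n; auto|].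
    destruct IH as [l [lt Al]]; [|exists l; auto].
    apply (uf_mono (uf_and H (uf_compl An))). intros i [[l [lt Al]] nAn].
    exists l. split; [|exact Al]. destruct (Nat.eq_dec l n); [subst; tauto | lia].
Qed.

Lemma uf_forall_lt (A : nat -> I -> Prop) n :
  (forall l, l < n -> U (A l)) -> U (fun i => forall l, l < n -> A l i).
Proof.
  induction n as [|n IH]; intros H; [apply uf_full; intros; lia|].
  assert (below : forall l, l < n -> U (A l)) by (intros l lt; apply H; lia).
  apply (uf_mono (uf_and (IH below) (H n (Nat.lt_succ_diag_r n)))).
  intros i [Hlt Hn] l lt. destruct (Nat.eq_dec l n); [subst; exact Hn | apply Hlt; lia].
Qed.

(* Junk value unless [g] is constant on a [U]-large set, which holds when [g] is bounded. *)
Definition ulim (g : I -> nat) : nat := epsilon (inhabits 0) (fun n => U (fun i => g i = n)).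

Lemma ulim_spec (g : I -> nat) B : (forall i, g i <= B) -> U (fun i => g i = ulim g).
Proof.
  intros gB. apply (epsilon_spec (inhabits 0) (fun n => U (fun i => g i = n))).
  destruct (uf_exists_lt (fun l i => g i = l) (S B)) as [l [_ Hl]]; [|eauto].
  apply uf_full. intros i. exists (g i). split; [apply Nat.lt_succ_r, gB | reflexivity].
Qed.

Definition cls {V : I -> Type} (a : forall i, V i) : ultraprod I V U :=
  exist _ (up_class I V U a) (ex_intro _ a eq_refl).

Lemma cls_surj {V : I -> Type} (P : ultraprod I V U) : exists a, P = cls a.
Proof. destruct P as [P [a ->]]. exists a. reflexivity. Qed.

Lemma cls_eq {V : I -> Type} (a b : forall i, V i) : cls a = cls b <-> U (fun i => a i = b i).
Proof.
  split.
  - intros E. change (up_class I V U a b).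
    replace (up_class I V U a) with (up_class I V U b)
      by exact (f_equal (@proj1_sig _ _) (eq_sym E)).
    apply uf_full. reflexivity.
  - intros Hab. apply sig_eq, functional_extensionality. intros c.
    apply propositional_extensionality. unfold up_class.
    split; intros H; apply (uf_mono (uf_and Hab H)); intros i [-> ->]; reflexivity.
Qed.

Lemma ultraprod_rel_cls {V : I -> Type} (E : forall i, V i -> V i -> Prop) a b :
  ultraprod_rel I V U E (cls a) (cls b) <-> U (fun i => E i (a i) (b i)).
Proof.
  split; [|intros H; exists a, b; auto].
  intros (a' & b' & Ea & Eb & H).
  assert (Ha : U (fun i => a i = a' i)) by (apply cls_eq, sig_eq, Ea).
  assert (Hb : U (fun i => b i = b' i)) by (apply cls_eq, sig_eq, Eb).
  apply (uf_mono (uf_and (uf_and Ha Hb) H)). intros i [[-> ->] Hi]. exact Hi.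
Qed.

Definition rep {V : I -> Type} (P : ultraprod I V U) : forall i, V i :=
  proj1_sig (constructive_indefinite_description _ (proj2_sig P)).

Lemma rep_cls {V : I -> Type} (a : forall i, V i) : U (fun i => rep (cls a) i = a i).
Proof.
  apply cls_eq, sig_eq. unfold rep.
  destruct (constructive_indefinite_description _ _) as [b Hb]. exact (eq_sym Hb).
Qed.

Definition umap {V W : I -> Type} (f : forall i, V i -> W i) (P : ultraprod I V U) :
  ultraprod I W U :=
  cls (fun i => f i (rep P i)).

Lemma umap_cls {V W : I -> Type} (f : forall i, V i -> W i) a :
  umap f (cls a) = cls (fun i => f i (a i)).
Proof. apply cls_eq. apply (uf_mono (rep_cls a)). intros i ->. reflexivity. Qed.

Lemma iter_umap {V : I -> Type} (f : forall i, V i -> V i) k a :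
  Nat.iter k (umap f) (cls a) = cls (fun i => Nat.iter k (f i) (a i)).
Proof. induction k as [|k IH]; [reflexivity|]. simpl. rewrite IH. apply umap_cls. Qed.

Definition umap_nat {V : I -> Type} (h : forall i, V i -> nat) (P : ultraprod I V U) : nat :=
  ulim (fun i => h i (rep P i)).

Lemma umap_nat_cls {V : I -> Type} (h : forall i, V i -> nat) B a :
  (forall i x, h i x <= B) -> U (fun i => h i (a i) = umap_nat h (cls a)).
Proof.
  intros hB. apply (uf_mono (uf_and (rep_cls a) (ulim_spec _ B (fun i => hB i (rep (cls a) i))))).
  intros i [E1 E2]. rewrite <- E1. exact E2.
Qed.

Lemma graph_iso_ultraprod {V W : I -> Type} (E : forall i, V i -> V i -> Prop)
  (F : forall i, W i -> W i -> Prop) (f : forall i, V i -> W i) :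
  (forall i, graph_iso (V i) (W i) (E i) (F i) (f i)) ->
  graph_iso (ultraprod I V U) (ultraprod I W U)
    (ultraprod_rel I V U E) (ultraprod_rel I W U F) (umap f).
Proof.
  intros Hf. split; [|split].
  - intros P Q. destruct (cls_surj P) as [a ->], (cls_surj Q) as [b ->].
    rewrite !umap_cls, !cls_eq. intros H. apply (uf_mono H). intros i. apply (Hf i).
  - intros P. destruct (cls_surj P) as [c ->].
    set (pre i := proj1_sig (constructive_indefinite_description _ (proj1 (proj2 (Hf i)) (c i)))).
    exists (cls pre). rewrite umap_cls. apply cls_eq, uf_full. intros i.
    exact (proj2_sig (constructive_indefinite_description _ (proj1 (proj2 (Hf i)) (c i)))).
  - intros P Q. destruct (cls_surj P) as [a ->], (cls_surj Q) as [b ->].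
    rewrite !umap_cls, !ultraprod_rel_cls. apply uf_iff. intros i. apply (Hf i).
Qed.

Section UltraproductTree.

Variables (r d : nat) (N : I -> Type) (root : forall i, N i) (par : forall i, N i -> N i)
  (dep lab : forall i, N i -> nat) (adj : I -> nat -> nat -> nat -> Prop).
Hypothesis HT : forall i, tree_model r d (N i) (root i) (par i) (dep i) (lab i) (adj i).

Definition uroot : ultraprod I N U := cls root.
Definition upar : ultraprod I N U -> ultraprod I N U := umap par.
Definition udep : ultraprod I N U -> nat := umap_nat dep.
Definition ulab : ultraprod I N U -> nat := umap_nat lab.
Definition uadj (x y l : nat) : Prop := U (fun i => adj i x y l).

Lemma upar_cls a : upar (cls a) = cls (fun i => par i (a i)).
Proof. apply umap_cls. Qed.

Lemma udep_cls a : U (fun i => dep i (a i) = udep (cls a)).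
Proof. apply (umap_nat_cls dep d). intros i x. apply (HT i). Qed.

Lemma ulab_cls a : U (fun i => lab i (a i) = ulab (cls a)).
Proof. apply (umap_nat_cls lab (S r)). intros i x. exact (tm_lab_le _ _ _ _ _ _ _ _ x (HT i)). Qed.

Lemma uroot_neq a : cls a <> uroot -> U (fun i => a i <> root i).
Proof. intros Ha. apply uf_compl. intros E. apply Ha, cls_eq, E. Qed.

Lemma is_leaf_cls a :
  is_leaf _ uroot upar (cls a) <-> U (fun i => is_leaf (N i) (root i) (par i) (a i)).
Proof.
  split.
  - intros L. apply NNPP. intros nL. apply uf_compl in nL.
    set (child i := epsilon (inhabits (a i)) (fun w => w <> root i /\ par i w = a i)).
    assert (Hchild : U (fun i => child i <> root i /\ par i (child i) = a i)).
    { apply (uf_mono nL). intros i Hi. apply NNPP in Hi.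
      exact (epsilon_spec (inhabits (a i)) (fun w => w <> root i /\ par i w = a i) Hi). }
    apply L. exists (cls child). split.
    + intros E. apply cls_eq in E. destruct (uf_nonempty (uf_and E Hchild)) as [i [Ei [Hi _]]].
      exact (Hi Ei).
    + rewrite upar_cls. apply cls_eq. apply (uf_mono Hchild). intros i [_ Hi]. exact Hi.
  - intros La [w [Hw Hpar]]. destruct (cls_surj w) as [b ->].
    rewrite upar_cls, cls_eq in Hpar.
    destruct (uf_nonempty (uf_and (uf_and (uroot_neq b Hw) Hpar) La)) as [i [[Hb Hp] Li]].
    exact (Li (ex_intro _ (b i) (conj Hb Hp))).
Qed.

Lemma tree_model_ultraprod : tree_model r d (ultraprod I N U) uroot upar udep ulab uadj.
Proof.
  split; [|split; [|split; [|split; [|split; [|split]]]]].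
  - split; [|split].
    + unfold uroot. rewrite upar_cls. apply cls_eq, uf_full. intros i. apply (HT i).
    + unfold uroot. destruct (uf_nonempty (udep_cls root)) as [i Hi]. rewrite <- Hi. apply (HT i).
    + intros v Hv. destruct (cls_surj v) as [a ->]. rewrite upar_cls.
      destruct (uf_nonempty (uf_and (uf_and (uroot_neq a Hv) (udep_cls a))
                                    (udep_cls (fun i => par i (a i))))) as [i [[Ha Hd] Hpd]].
      rewrite <- Hd, <- Hpd. apply (HT i), Ha.
  - intros v. destruct (cls_surj v) as [a ->]. destruct (uf_nonempty (udep_cls a)) as [i Hi].
    rewrite <- Hi. apply (HT i).
  - intros v L. destruct (cls_surj v) as [a ->]. apply is_leaf_cls in L.
    destruct (uf_nonempty (uf_and L (udep_cls a))) as [i [Li Hi]]. rewrite <- Hi. apply (HT i), Li.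
  - intros v L. destruct (cls_surj v) as [a ->]. apply is_leaf_cls in L.
    destruct (uf_nonempty (uf_and L (ulab_cls a))) as [i [Li Hi]]. rewrite <- Hi. apply (HT i), Li.
  - intros v L. destruct (cls_surj v) as [a ->]. rewrite is_leaf_cls in L. apply uf_compl in L.
    destruct (uf_nonempty (uf_and L (ulab_cls a))) as [i [Li Hi]]. rewrite <- Hi. apply (HT i), Li.
  - intros x y l Hadj. destruct (uf_nonempty Hadj) as [i Hi].
    destruct (HT i) as (_ & _ & _ & _ & _ & adj_range & _). exact (adj_range _ _ _ Hi).
  - intros x y l. apply uf_iff. intros i. apply (HT i).
Qed.

Lemma leaf_dist_half_cls a b l :
  leaf_dist_half _ upar (cls a) (cls b) l <->
  U (fun i => leaf_dist_half (N i) (par i) (a i) (b i) l).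
Proof.
  assert (iter_eq : forall k, Nat.iter k upar (cls a) = Nat.iter k upar (cls b) <->
                              U (fun i => Nat.iter k (par i) (a i) = Nat.iter k (par i) (b i))).
  { intros k. unfold upar. rewrite !iter_umap. apply cls_eq. }
  unfold leaf_dist_half. rewrite iter_eq. split.
  - intros [Hl Hlt].
    assert (Hneq : forall k, k < l ->
                   U (fun i => Nat.iter k (par i) (a i) <> Nat.iter k (par i) (b i))).
    { intros k lt. apply uf_compl. intros E. apply (Hlt k lt), iter_eq, E. }
    apply (uf_mono (uf_and Hl (uf_forall_lt _ l Hneq))). intros i [Hi Hk]. split; assumption.
  - intros H. split; [apply (uf_mono H); intros i [Hi _]; exact Hi|].
    intros k lt E. apply iter_eq in E.
    destruct (uf_nonempty (uf_and H E)) as [i [[_ Hk] Ei]]. exact (Hk k lt Ei).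
Qed.

(* An edge needs a distance [l <= d]: finitely many choices, so one of them is [U]-large. *)
Lemma tm_edge_cls a b :
  (exists l, leaf_dist_half _ upar (cls a) (cls b) l /\ uadj (ulab (cls a)) (ulab (cls b)) l) <->
  U (fun i => exists l, leaf_dist_half (N i) (par i) (a i) (b i) l /\
                        adj i (lab i (a i)) (lab i (b i)) l).
Proof.
  assert (labs : U (fun i => lab i (a i) = ulab (cls a) /\ lab i (b i) = ulab (cls b)))
    by exact (uf_and (ulab_cls a) (ulab_cls b)).
  split.
  - intros [l [Hl Hadj]]. apply leaf_dist_half_cls in Hl.
    apply (uf_mono (uf_and (uf_and Hl Hadj) labs)). intros i [[Hli Hi] [-> ->]]. eauto.
  - intros H.
    destruct (uf_exists_lt (fun l i => leaf_dist_half (N i) (par i) (a i) (b i) l /\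
                                       adj i (lab i (a i)) (lab i (b i)) l) (S d)) as [l [_ Hl]].
    + apply (uf_mono H). intros i [l [Hli Hi]]. exists l. split; [|split; assumption].
      destruct (HT i) as (_ & _ & _ & _ & _ & adj_range & _).
      pose proof (adj_range _ _ _ Hi). lia.
    + exists l. split.
      * apply leaf_dist_half_cls. apply (uf_mono Hl). intros i [Hi _]. exact Hi.
      * apply (uf_mono (uf_and Hl labs)). intros i [[_ Hi] [<- <-]]. exact Hi.
Qed.

Lemma is_leaf_umap_val (P : ultraprod I (fun i => tm_leaf (N i) (root i) (par i)) U) :
  is_leaf _ uroot upar (umap (fun i => @proj1_sig _ _) P).
Proof.
  destruct (cls_surj P) as [a ->]. rewrite umap_cls.
  apply is_leaf_cls, uf_full. intros i. exact (proj2_sig (a i)).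
Qed.

Definition uleaf (P : ultraprod I (fun i => tm_leaf (N i) (root i) (par i)) U) :
  tm_leaf _ uroot upar :=
  exist _ (umap (fun i => @proj1_sig _ _) P) (is_leaf_umap_val P).

Lemma graph_iso_uleaf :
  graph_iso (ultraprod I (fun i => tm_leaf (N i) (root i) (par i)) U) (tm_leaf _ uroot upar)
    (ultraprod_rel I _ U (fun i => tm_edge (N i) (root i) (par i) (lab i) (adj i)))
    (tm_edge _ uroot upar ulab uadj) uleaf.
Proof.
  split; [|split].
  - intros P Q E. destruct (cls_surj P) as [a ->], (cls_surj Q) as [b ->].
    apply (f_equal (@proj1_sig _ _)) in E. simpl in E. rewrite !umap_cls, cls_eq in E.
    apply cls_eq. apply (uf_mono E). intros i. apply sig_eq.
  - intros [v L]. destruct (cls_surj v) as [b ->]. pose proof (proj1 (is_leaf_cls b) L) as Lb.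
    set (leaf_at i := epsilon (tm_leaf_inhabited _ _ _ _ _ _ _ _ (HT i))
                              (fun x => proj1_sig x = b i)).
    exists (cls leaf_at). apply sig_eq. simpl. rewrite umap_cls. apply cls_eq.
    apply (uf_mono Lb). intros i Li. apply epsilon_spec. exists (exist _ (b i) Li). reflexivity.
  - intros P Q. destruct (cls_surj P) as [a ->], (cls_surj Q) as [b ->].
    unfold tm_edge. simpl. rewrite !umap_cls, ultraprod_rel_cls. symmetry. apply tm_edge_cls.
Qed.

End UltraproductTree.

Lemma TM_ultraprod r d (V : I -> Type) (E : forall i, V i -> V i -> Prop) :
  (forall i, TM r d (V i) (E i)) -> TM r d (ultraprod I V U) (ultraprod_rel I V U E).
Proof.
  intros HV.
  set (w i := epsilon (TM_witness _ _ _ _ (HV i)) (fun _ => True)).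
  eapply TM_iso; [|exact (graph_iso_ultraprod _ _ _ (fun i => w_iso _ _ _ _ (w i)))].
  eapply TM_iso_inv; [|exact (graph_iso_uleaf _ _ _ _ _ _ _ _ (fun i => w_model _ _ _ _ (w i)))].
  exact (TM_of_tree_model r d _ _ _ _ _ _
    (tree_model_ultraprod r d _ _ _ _ _ _ (fun i => w_model _ _ _ _ (w i)))).
Qed.

Lemma TM_ultraroot r d (H : Type) (EH : H -> H -> Prop) :
  TM r d (ultraprod I (fun _ => H) U) (ultraprod_rel I (fun _ => H) U (fun _ => EH)) ->
  TM r d H EH.
Proof.
  intros HT. apply (TM_induced_embedding r d _ _ H EH (fun x => cls (fun _ => x)) HT).
  - destruct (TM_inhabited _ _ _ _ HT) as [P]. destruct (cls_surj P) as [a _].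
    destruct (uf_nonempty (A := fun _ => True) (uf_full (fun _ => Logic.I))) as [i _].
    exact (inhabits (a i)).
  - intros x y E. apply cls_eq in E. destruct (uf_nonempty E) as [i Ei]. exact Ei.
  - intros x y. rewrite ultraprod_rel_cls. split.
    + intros Exy. apply uf_full. auto.
    + intros Exy. destruct (uf_nonempty Exy) as [i Ei]. exact Ei.
Qed.

End Ultraproduct.

Theorem theorem2 (r d : nat) :
  (* (a) closure under ultraproducts *)
  (forall (I : Type) (V : I -> Type) (E : forall i, V i -> V i -> Prop)
          (U : (I -> Prop) -> Prop),
      ultrafilter I U ->
      (forall i, is_graph (V i) (E i)) ->
      (forall i, TM r d (V i) (E i)) ->
      TM r d (ultraprod I V U) (ultraprod_rel I V U E)) /\
  (* (b) closure under ultraroots *)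
  (forall (H : Type) (EH : H -> H -> Prop) (I : Type) (U : (I -> Prop) -> Prop),
      is_graph H EH ->
      ultrafilter I U ->
      TM r d (ultraprod I (fun _ => H) U) (ultraprod_rel I (fun _ => H) U (fun _ => EH)) ->
      TM r d H EH).
Proof.
  split.
  - intros I V E U HU _ HV. exact (TM_ultraprod HU r d V E HV).
  - intros H EH I U _ HU HT. exact (TM_ultraroot HU r d H EH HT).
Qed.
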